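(* Let $\mathsf{Prop}$ be a non-empty set of propositions and $\mathsf{L}$ any fragment of $\mathsf{LTL}(\mathsf{Prop})$. Let $\mathcal{S}=(\mathcal{P},\mathcal{N})$ be a sample of words in $\mathcal{W}(\mathsf{Prop})$, each $w\in\mathcal{P}\cup\mathcal{N}$ given as $w=u_w\cdot v_w^\omega$ with $u_w,v_w\in(2^{\mathsf{Prop}})^*$, $u_wv_w\neq\varepsilon$. If there is an $\mathcal{S}$-separating $\mathsf{L}$-formula, then there is one of size at most $2^n$, where $n:=\sum_{w\in\mathcal{P}\cup\mathcal{N}}(|u_w|+|v_w|)$.
   Context: $\mathsf{LTL}(\mathsf{Prop})$-formulas: $\varphi::=p\mid\neg\varphi\mid\varphi\vee\varphi\mid\varphi\wedge\varphi\mid\mathbf{X}\varphi\mid\mathbf{F}\varphi\mid\mathbf{G}\varphi\mid\varphi\,\mathbf{U}\,\varphi$, $p\in\mathsf{Prop}$. A fragment is given by a subset of these operators; its formulas are those using only them. $\mathsf{sz}(\varphi)$ is the number of distinct subformulas. $\mathcal{W}(\mathsf{Prop})=\{u\cdot v^\omega: u,v\in(2^{\mathsf{Prop}})^*,\ u\cdot v\ne\varepsilon\}$, where for $v=\varepsilon$ this denotes the finite word $u$. For a word $w$, $|w|\in\mathbb{N}\cup\{\infty\}$ is its length, $w[j]$ its $j$-th letter and $w[j:]$ its suffix from position $j$. Semantics: $w\models p$ iff $p\in w[0]$; Boolean connectives as usual; $w\models\mathbf{X}\varphi$ iff $|w|\ge2$ and $w[1:]\models\varphi$; $w\models\mathbf{F}\varphi$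 iff $\exists j<|w|$, $w[j:]\models\varphi$; $w\models\mathbf{G}\varphi$ iff $\forall j<|w|$, $w[j:]\models\varphi$; $w\models\varphi_1\mathbf{U}\varphi_2$ iff $\exists j<|w|$ with $w[j:]\models\varphi_2$ and $w[k:]\models\varphi_1$ for all $k<j$. A sample is a pair of finite sets of words; a formula is $\mathcal{S}$-separating if satisfied by every word in $\mathcal{P}$ and by none in $\mathcal{N}$. *)

From HB Require Import structures.
From mathcomp Require Import all_boot.
From Stdlib Require List.
Set Implicit Arguments. Unset Strict Implicit. Unset Printing Implicit Defensive.

Section LTL.
Variable AP : eqType.

Inductive form : Type :=
| FAtom of AP
| FNot of form
| FOr of form & form
| FAnd of form & form
| FX of form
| FF of form
| FG of form
| FU of form & form.

Fixpoint form_eqb (f g : form) : bool :=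
  match f, g with
  | FAtom p, FAtom q => p == q
  | FNot a, FNot b => form_eqb a b
  | FOr a1 a2, FOr b1 b2 => form_eqb a1 b1 && form_eqb a2 b2
  | FAnd a1 a2, FAnd b1 b2 => form_eqb a1 b1 && form_eqb a2 b2
  | FX a, FX b => form_eqb a b
  | FF a, FF b => form_eqb a b
  | FG a, FG b => form_eqb a b
  | FU a1 a2, FU b1 b2 => form_eqb a1 b1 && form_eqb a2 b2
  | _, _ => false
  end.

Lemma form_eqP : Equality.axiom form_eqb.
Proof.
elim=> [p|a IHa|a1 IH1 a2 IH2|a1 IH1 a2 IH2|a IHa|a IHa|a IHa|a1 IH1 a2 IH2]
  [q|b|b1 b2|b1 b2|b|b|b|b1 b2] /=; try by constructor.
- by apply: (iffP eqP) => [->|[]].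
- by apply: (iffP (IHa b)) => [->|[]].
- by apply: (iffP andP) => [[/IH1 -> /IH2 ->]|[<- <-]]; split; [apply/IH1|apply/IH2].
- by apply: (iffP andP) => [[/IH1 -> /IH2 ->]|[<- <-]]; split; [apply/IH1|apply/IH2].
- by apply: (iffP (IHa b)) => [->|[]].
- by apply: (iffP (IHa b)) => [->|[]].
- by apply: (iffP (IHa b)) => [->|[]].
- by apply: (iffP andP) => [[/IH1 -> /IH2 ->]|[<- <-]]; split; [apply/IH1|apply/IH2].
Qed.

HB.instance Definition _ := hasDecEq.Build form form_eqP.

(* The (non-atomic) operators; a fragment is a subset of them. *)
Inductive op : Type := ONot | OOr | OAnd | OX | OF | OG | OU.

Fixpoint in_frag (L : op -> bool) (f : form) : bool :=
  match f with
  | FAtom _ => true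
  | FNot a => L ONot && in_frag L a
  | FOr a b => [&& L OOr, in_frag L a & in_frag L b]
  | FAnd a b => [&& L OAnd, in_frag L a & in_frag L b]
  | FX a => L OX && in_frag L a
  | FF a => L OF && in_frag L a
  | FG a => L OG && in_frag L a
  | FU a b => [&& L OU, in_frag L a & in_frag L b]
  end.

Fixpoint subforms (f : form) : seq form :=
  f :: match f with
       | FAtom _ => [::]
       | FNot a | FX a | FF a | FG a => subforms a
       | FOr a b | FAnd a b | FU a b => subforms a ++ subforms b
       end.

Definition sz (f : form) : nat := size (undup (subforms f)).

Definition letter := AP -> bool.

(* a word u . v^omega given by its pair (u, v); v = [::] means the finite word u *)
Record word := Word { wu : seq letter; wv : seq letter }.

Definition wf_word (w : word) : Prop := wu w ++ wv w <> [::].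

Definition wat (w : word) (j : nat) : letter :=
  if j < size (wu w) then nth (fun _ => false) (wu w) j
  else nth (fun _ => false) (wv w) ((j - size (wu w)) %% size (wv w)).

(* j < |w|  (|w| = infinity when v is non-empty) *)
Definition inlen (w : word) (j : nat) : Prop :=
  wv w = [::] -> j < size (wu w).

Fixpoint sat (w : word) (i : nat) (f : form) : Prop :=
  match f with
  | FAtom p => wat w i p
  | FNot a => ~ sat w i a
  | FOr a b => sat w i a \/ sat w i b
  | FAnd a b => sat w i a /\ sat w i b
  | FX a => inlen w i.+1 /\ sat w i.+1 a
  | FF a => exists j, i <= j /\ inlen w j /\ sat w j a
  | FG a => forall j, i <= j -> inlen w j -> sat w j a
  | FU a b => exists j, [/\ i <= j, inlen w j, sat w j b &
                          forall k, i <= k -> k < j -> sat w k a]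
  end.

Definition models (w : word) (f : form) : Prop := sat w 0 f.

Definition separating (P N : seq word) (f : form) : Prop :=
  (forall w, List.In w P -> models w f) /\ (forall w, List.In w N -> ~ models w f).

Definition sample_size (P N : seq word) : nat :=
  \sum_(w <- P ++ N) (size (wu w) + size (wv w)).

End LTL.

From HB Require Import structures.
From mathcomp Require Import all_boot.
From mathcomp Require Import boolp.
From mathcomp Require Import zify.
From Stdlib Require List.

Set Implicit Arguments. Unset Strict Implicit. Unset Printing Implicit Defensive.

(* The truth value of a formula at a position of u v^omega only depends on
   the position modulo |v| once past u, so it is determined by its n values at
   the first |u| + |v| positions of each sample word: a vector in {0,1}^n.
   If phi has more than 2^n distinct subformulas, two distinct ones, x and y,
   share this vector and are therefore equivalent at every position of every
   sample word.  Replacing y by x in phi, with y chosen not to occur in x,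
   preserves separation and the fragment and strictly decreases the number of
   distinct subformulas; iterate. *)

Lemma map_uniq_inj_in (T U : eqType) (f : T -> U) (s : seq T) :
  uniq (map f s) -> {in s &, injective f}.
Proof.
elim: s => //= a s IH /andP[fa_notin /IH inj_f] x y.
rewrite !inE => /predU1P[->|xs] /predU1P[->|ys] // efxy.
- by rewrite efxy map_f in fa_notin.
- by rewrite -efxy map_f in fa_notin.
- exact: inj_f.
Qed.

Lemma size_undup_map_lt (T U : eqType) (f : T -> U) (s : seq T) x y :
  x \in s -> y \in s -> x != y -> f x = f y -> size (undup (map f s)) < size s.
Proof.
move=> xs ys nxy efxy; rewrite -(size_map f) ltn_size_undup.
by apply: contra nxy => /map_uniq_inj_in/(_ x y xs ys efxy)->.
Qed.

Lemma map_collision (T U : eqType) (f : T -> U) (s : seq T) :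
  uniq s -> ~~ uniq (map f s) ->
  exists x y, [/\ x \in s, y \in s, x != y & f x = f y].
Proof.
case: s => [//|x0 s0] us /(uniqPn (f x0))[i [j [ltij ltj enth]]].
rewrite size_map in ltj; have lti := ltn_trans ltij ltj.
exists (nth x0 (x0 :: s0) i), (nth x0 (x0 :: s0) j).
rewrite !mem_nth // nth_uniq // (ltn_eqF ltij).
by rewrite !(nth_map x0) // in enth.
Qed.

Lemma size_uniq_bitseqs (s : seq bitseq) n :
  uniq s -> all (fun b => size b == n) s -> size s <= 2 ^ n.
Proof.
move=> us; rewrite all_count => /eqP size_s.
rewrite -size_s -(size_pmap_sub (n.-tuple bool)) -card_bool -card_tuple.
have /card_uniqP <- := pmap_sub_uniq (n.-tuple bool) us.
exact: max_card.
Qed.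

Section LTL.
Variable AP : eqType.
Implicit Types (w : word AP) (f g x y : form AP).

Lemma subforms_trans f g h :
  f \in subforms g -> g \in subforms h -> f \in subforms h.
Proof.
move=> fg; elim: h => [p|a IHa|a IHa b IHb|a IHa b IHb|a IHa|a IHa|a IHa|a IHa b IHb];
rewrite {1}[subforms _]/= in_cons => /predU1P[<- //|];
rewrite /= in_cons ?mem_cat //;
by [move/IHa->; rewrite orbT | case/orP=> [/IHa|/IHb]->; rewrite ?orbT].
Qed.

Lemma size_subforms_le f g :
  f \in subforms g -> size (subforms f) <= size (subforms g).
Proof.
elim: g => [p|a IHa|a IHa b IHb|a IHa b IHb|a IHa|a IHa|a IHa|a IHa b IHb];
rewrite {1}[subforms _]/= in_cons => /predU1P[-> //|];
rewrite /= ?in_nil ?mem_cat ?size_cat //;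
by [move/IHa/leqW | case/orP=> [/IHa|/IHb] /leq_trans; apply; apply/leqW;
    rewrite ?leq_addr ?leq_addl].
Qed.

Lemma subforms_antisym f g :
  f \in subforms g -> g \in subforms f -> f = g.
Proof.
have lt_proper h : h \in subforms g -> h != g -> size (subforms h) < size (subforms g).
  case: g => [p|a|a b|a b|a|a|a|a b]; rewrite {1}[subforms _]/= in_cons => /predU1P[->|];
  rewrite ?eqxx //= ?mem_cat ?size_cat ltnS => + _;
  by [move/size_subforms_le | case/orP=> /size_subforms_le/leq_trans->; rewrite ?leq_addr ?leq_addl].
move=> fg gf; apply/eqP/negPn/negP => nfg.
by have := lt_proper f fg nfg; rewrite ltnNge size_subforms_le.
Qed.

Lemma in_frag_subforms L f g : f \in subforms g -> in_frag L g -> in_frag L f.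
Proof.
elim: g => [p|a IHa|a IHa b IHb|a IHa b IHb|a IHa|a IHa|a IHa|a IHa b IHb];
rewrite {1}[subforms _]/= in_cons => /predU1P[-> //|]; rewrite /= ?mem_cat //;
by [move/IHa => h /andP[_ /h] | case/orP=> [/IHa|/IHb] h /and3P[_ ha hb]; exact: h].
Qed.

Fixpoint subst y x f : form AP :=
  if f == y then x else
  match f with
  | FAtom p => FAtom p
  | FNot a => FNot (subst y x a)
  | FOr a b => FOr (subst y x a) (subst y x b)
  | FAnd a b => FAnd (subst y x a) (subst y x b)
  | FX a => FX (subst y x a)
  | FF a => FF (subst y x a)
  | FG a => FG (subst y x a)
  | FU a b => FU (subst y x a) (subst y x b)
  end.

Lemma subst_self y x : subst y x y = x.
Proof. by case: y => * /=; rewrite eqxx. Qed.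

Lemma subst_notin y x f : y \notin subforms f -> subst y x f = f.
Proof.
elim: f => [p|a IHa|a IHa b IHb|a IHa b IHb|a IHa|a IHa|a IHa|a IHa b IHb];
rewrite {1}[subforms _]/= in_cons negb_or ?mem_cat ?negb_or eq_sym => /andP[/negbTE/= -> ];
by [ | move/IHa-> | case/andP=> /IHa-> /IHb->].
Qed.

Lemma in_frag_subst L y x f : in_frag L x -> in_frag L f -> in_frag L (subst y x f).
Proof.
move=> Lx; elim: f => [p|a IHa|a IHa b IHb|a IHa b IHb|a IHa|a IHa|a IHa|a IHa b IHb] /=;
case: ifP => _ //=;
by [move=> /andP[-> /IHa->] | move=> /and3P[-> /IHa-> /IHb->]].
Qed.

Lemma subforms_subst y x f :
  {subset subforms (subst y x f) <= map (subst y x) (subforms f) ++ subforms x}.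
Proof.
elim: f => [p|a IHa|a IHa b IHb|a IHa b IHb|a IHa|a IHa|a IHa|a IHa b IHb] z;
rewrite mem_cat [subst _ _ _]/=; case: ifP => [_ ->|f_ny]; rewrite ?orbT //.
all: rewrite /= f_ny !in_cons => /predU1P[->|]; rewrite ?eqxx // ?map_cat ?mem_cat -?orbA.
all: first [move/IHa | case/orP=> [/IHa|/IHb]]; by rewrite mem_cat => /orP[]->; rewrite ?orbT.
Qed.

Lemma sz_subst_lt phi y x :
  x \in subforms phi -> y \in subforms phi -> x != y -> y \notin subforms x ->
  sz (subst y x phi) < sz phi.
Proof.
move=> x_phi y_phi nxy y_nx; set s := undup (subforms phi).
have sub : {subset undup (subforms (subst y x phi)) <= undup (map (subst y x) s)}.
  move=> z; rewrite !mem_undup => /subforms_subst; rewrite mem_cat => /orP[|z_x].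
    by case/mapP=> u u_phi ->; rewrite map_f ?mem_undup.
  have y_nz : y \notin subforms z by apply: contra y_nx => /subforms_trans; apply.
  by rewrite -(subst_notin x y_nz) map_f // mem_undup (subforms_trans z_x).
apply: leq_ltn_trans (uniq_leq_size (undup_uniq _) sub) _.
apply: (size_undup_map_lt (x := x) (y := y)); rewrite ?mem_undup //.
by rewrite subst_self subst_notin.
Qed.

Definition wlen w := size (wu w) + size (wv w).

Lemma wf_word_inlen0 w : wf_word w -> inlen w 0.
Proof. by move=> wf_w v_nil; move: wf_w; rewrite /wf_word v_nil cats0; case: (wu w). Qed.

Definition same_future w w' i i' : Prop :=
  forall d, wat w (i + d) = wat w' (i' + d) /\ (inlen w (i + d) <-> inlen w' (i' + d)).

Section SameFuture.
Variables (w w' : word AP) (i i' : nat).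
Hypothesis sf : same_future w w' i i'.

Lemma same_future_sym : same_future w' w i' i.
Proof. by move=> d; have [-> ?] := sf d; split; [|apply: iff_sym]. Qed.

Lemma same_future_inlen : inlen w i <-> inlen w' i'.
Proof. by have [_] := sf 0; rewrite !addn0. Qed.

Lemma same_future_shift d : same_future w w' (i + d) (i' + d).
Proof. by move=> e; rewrite -!addnA; apply: sf. Qed.

Lemma same_future_at j : i <= j -> same_future w w' j (i' + (j - i)).
Proof. by move=> ij; rewrite -{1}(subnKC ij); apply: same_future_shift. Qed.

End SameFuture.

Lemma sat_same_future f w w' i i' :
  same_future w w' i i' -> sat w i f -> sat w' i' f.
Proof.
elim: f w w' i i' => [p|a IHa|a IHa b IHb|a IHa b IHb|a IHa|a IHa|a IHa|a IHa b IHb]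
  w w' i i' sf /=.
- by have [+ _] := sf 0; rewrite !addn0 => ->.
- by move=> not_a /(IHa _ _ _ _ (same_future_sym sf)).
- by case=> [/(IHa _ _ _ _ sf)|/(IHb _ _ _ _ sf)]; [left|right].
- by case=> /(IHa _ _ _ _ sf) ? /(IHb _ _ _ _ sf).
- have sf1 := same_future_shift sf 1; rewrite !addn1 in sf1.
  by case=> /(same_future_inlen sf1) ? /(IHa _ _ _ _ sf1).
- case=> j [ij [len_j a_j]]; have sfj := same_future_at sf ij.
  exists (i' + (j - i)); split; first exact: leq_addr.
  by split; [apply/(same_future_inlen sfj) | apply: (IHa _ _ _ _ sfj)].
- move=> a_after j' ij' len_j'.
  have sfj := same_future_sym (same_future_at (same_future_sym sf) ij').
  apply: (IHa _ _ _ _ sfj) (a_after _ (leq_addr _ _) _); exact/(same_future_inlen sfj).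
- case=> j [ij len_j b_j a_before]; have sfj := same_future_at sf ij.
  exists (i' + (j - i)); split=> [||| k' ik' kj'].
  + exact: leq_addr.
  + exact/(same_future_inlen sfj).
  + exact: (IHb _ _ _ _ sfj b_j).
  have sfk := same_future_sym (same_future_at (same_future_sym sf) ik').
  by apply: (IHa _ _ _ _ sfk) (a_before _ (leq_addr _ _) _); lia.
Qed.

Lemma same_future_period w k : wv w <> [::] ->
  same_future w w (size (wu w) + k) (size (wu w) + k %% size (wv w)).
Proof.
move=> v_cons d; split; last by split=> _ /v_cons.
by rewrite /wat -!addnA !ltnNge !leq_addr /= !addKn modnDml.
Qed.

Lemma sat_agree_prefix w f g :
  (forall i, i < wlen w -> (sat w i f <-> sat w i g)) ->
  forall i, inlen w i -> (sat w i f <-> sat w i g).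
Proof.
move=> agree i len_i; case E: (wv w) => [|c v].
  by apply: agree; move: (len_i E); rewrite /wlen E addn0.
have v_cons : wv w <> [::] by rewrite E.
have v_pos : 0 < size (wv w) by rewrite E.
have [|] := ltnP i (wlen w); first exact: agree.
rewrite /wlen => /(leq_trans (leq_addr _ _))/subnKC <-.
set k := i - size (wu w); have sfk := same_future_period k v_cons.
have per h : sat w (size (wu w) + k) h <-> sat w (size (wu w) + k %% size (wv w)) h.
  exact: conj (sat_same_future sfk) (sat_same_future (same_future_sym sfk)).
have := agree (size (wu w) + k %% size (wv w)).
rewrite /wlen ltn_add2l ltn_pmod // => /(_ isT).
by have := per f; have := per g; tauto.
Qed.

Lemma inlen_le w j k : inlen w j -> k <= j -> inlen w k.
Proof. by move=> len_j kj /len_j; apply: leq_ltn_trans. Qed.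

Lemma sat_subst w y x :
  (forall i, inlen w i -> (sat w i x <-> sat w i y)) ->
  forall f i, inlen w i -> (sat w i (subst y x f) <-> sat w i f).
Proof.
move=> equiv_xy.
elim=> [p|a IHa|a IHa b IHb|a IHa b IHb|a IHa|a IHa|a IHa|a IHa b IHb] i len_i;
(rewrite [subst _ _ _]/=; case: eqP => [->|_]; first exact: equiv_xy) => /=.
- by [].
- by have := IHa i len_i; tauto.
- by have := IHa i len_i; have := IHb i len_i; tauto.
- by have := IHa i len_i; have := IHb i len_i; tauto.
- by have := IHa i.+1; tauto.
- by split=> -[j [ij [len_j a_j]]]; exists j; do !split=> //; apply/(IHa j len_j).
- by split=> a_after j ij len_j; apply/(IHa j len_j); apply: a_after.
- split=> -[j [ij len_j b_j a_before]]; exists j; split=> //.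
  all: try exact/(IHb j len_j).
  all: move=> k ik kj; apply/(IHa k (inlen_le len_j (ltnW kj))); exact: a_before.
Qed.

Definition wcharvec w f : bitseq := [seq `[< sat w i f >] | i <- iota 0 (wlen w)].

Definition charvec (S : seq (word AP)) f : bitseq := flatten [seq wcharvec w f | w <- S].

Lemma size_charvec S f : size (charvec S f) = \sum_(w <- S) wlen w.
Proof.
elim: S => [|w S IH]; first by rewrite big_nil.
by rewrite big_cons /= size_cat size_map size_iota IH.
Qed.

Lemma charvec_eq_sat S f g w : charvec S f = charvec S g -> List.In w S ->
  forall i, i < wlen w -> (sat w i f <-> sat w i g).
Proof.
elim: S => [//|w0 S IH] /eqP /=; rewrite eqseq_cat ?size_map //.
case/andP=> /eqP e0 /eqP eS [<-|wS] i lt_i; last exact: IH eS wS i lt_i.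
apply: asbool_eq_equiv; move/(congr1 (nth false ^~ i)): e0.
by rewrite !(nth_map 0) ?size_iota // nth_iota.
Qed.

End LTL.

Lemma separating_equiv (AP : eqType) (P N : seq (word AP)) f g :
  (forall w, List.In w (P ++ N) -> (models w f <-> models w g)) ->
  separating P N f -> separating P N g.
Proof.
move=> fg [sepP sepN]; split=> w wS.
- have wPN : List.In w (P ++ N) by apply: List.in_or_app; left.
  by apply/(fg w wPN); apply: sepP.
- have wPN : List.In w (P ++ N) by apply: List.in_or_app; right.
  by move/(fg w wPN); apply: sepN.
Qed.

Lemma separating_shrink (AP : eqType) (L : op -> bool) (P N : seq (word AP)) phi :
  (forall w, List.In w (P ++ N) -> wf_word w) ->
  in_frag L phi -> separating P N phi -> 2 ^ sample_size P N < sz phi ->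
  exists phi', [/\ in_frag L phi', separating P N phi' & sz phi' < sz phi].
Proof.
move=> wf L_phi sep big; set S := P ++ N.
have [x [y [xs ys nxy char_xy]]] : exists x y,
    [/\ x \in undup (subforms phi), y \in undup (subforms phi), x != y
      & charvec S x = charvec S y].
  apply: map_collision; first exact: undup_uniq.
  apply: contraL big => /(size_uniq_bitseqs (n := sample_size P N)) le_sz.
  rewrite -leqNgt /sz -(size_map (charvec S)); apply: le_sz.
  by apply/allP=> b /mapP[f _ ->]; rewrite size_charvec.
have equiv_xy w : List.In w S -> forall i, inlen w i -> (sat w i x <-> sat w i y).
  by move=> wS; apply: sat_agree_prefix => i; apply: charvec_eq_sat char_xy wS i.
rewrite !mem_undup in xs ys.
(* Replacing y by x only shrinks phi if y does not occur inside x. *)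
wlog y_nx : x y xs ys nxy equiv_xy {char_xy} / y \notin subforms x.
  move=> hwlog; have [y_x|] := boolP (y \in subforms x); last exact: hwlog.
  apply: (hwlog y x); rewrite 1?eq_sym //.
    by move=> w wS i len_i; apply: iff_sym; apply: equiv_xy.
  by apply: contra nxy => x_y; rewrite (subforms_antisym x_y y_x).
exists (subst y x phi); split; last exact: sz_subst_lt.
  exact: in_frag_subst (in_frag_subforms xs L_phi) L_phi.
apply: separating_equiv sep => w wS; apply: iff_sym.
exact: sat_subst (equiv_xy w wS) phi 0 (wf_word_inlen0 (wf w wS)).
Qed.

Theorem corollary2 (AP : eqType) (HAP : inhabited AP) (L : op -> bool)
    (P N : seq (word AP)) :
  (forall w, List.In w (P ++ N) -> wf_word w) ->
  (exists phi : form AP, in_frag L phi /\ separating P N phi) ->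
  exists phi : form AP,
    [/\ in_frag L phi, separating P N phi & sz phi <= 2 ^ sample_size P N].
Proof.
move=> wf [phi [L_phi sep]].
have [k] := ubnP (sz phi); elim: k phi L_phi sep => // k IH phi L_phi sep sz_phi.
have [small|big] := leqP (sz phi) (2 ^ sample_size P N); first by exists phi.
have [phi' [L_phi' sep' lt_sz]] := separating_shrink wf L_phi sep big.
exact: IH phi' L_phi' sep' (leq_trans lt_sz sz_phi).
Qed.
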